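(* Let $\langle\mathcal X,\mathcal C,d,(x_1,\dots,x_n)\rangle$ be a facility location instance, let $q^\star$ be a population-optimal location, and for each panel $S$ let $\overline q(S)$ be a panel-optimal location. Fix $T>2$ and $\delta\in(0,1)$, and let $k\le n$ be an integer with $$k\ge\frac{2\log(1/\delta)}{\log\big(T^2/(4(T-1))\big)} .$$ Then $\mathbb P_{S\sim\mathcal U_{k,n}}\big[d(q^\star,\overline q(S))\le T\cdot\textsc{Social-Opt}\big]\ge1-\delta$.
   Context: A facility location instance $\langle\mathcal X,\mathcal C,d,(x_1,\dots,x_n)\rangle$ consists of a metric space $(\mathcal X,d)$ with $d:\mathcal X\times\mathcal X\to[0,1]$, a set of candidate locations $\mathcal C\subseteq\mathcal X$, and agent locations $x_1,\dots,x_n\in\mathcal X$. $\textsc{Social-Cost}(q)=\frac1n\sum_{i=1}^n d(q,x_i)$, $\textsc{Social-Opt}=\min_{q\in\mathcal C}\textsc{Social-Cost}(q)$, $q^\star\in\arg\min_{q\in\mathcal C}\textsc{Social-Cost}(q)$; for a panel $S\subseteq[n]$ of size $k$, $\textsc{Panel-Cost}(q,S)=\frac1k\sum_{i\in S}d(q,x_i)$ and $\overline q(S)\in\arg\min_{q\in\mathcal C}\textsc{Panel-Cost}(q,S)$ (minimizers are assumed to exist). $\mathcal U_{k,n}$ is the uniform distribution over subsets of $[n]$ of size $k$. *)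

From HB Require Import structures.
From mathcomp Require Import all_boot all_order all_algebra.
From mathcomp Require Import all_classical all_reals all_analysis.
Set Implicit Arguments. Unset Strict Implicit. Unset Printing Implicit Defensive.
Import Order.TTheory GRing.Theory Num.Theory.
Local Open Scope ring_scope.

Section FacilityLocation.
Variables (R : realType) (X : Type).

Definition is_metric01 (d : X -> X -> R) : Prop :=
  [/\ forall p q, 0 <= d p q <= 1,
      forall p q, d p q = 0 <-> p = q,
      forall p q, d p q = d q p
    & forall p q r, d p r <= d p q + d q r].

Definition social_cost (n : nat) (d : X -> X -> R) (x : 'I_n -> X) (q : X) : R :=
  n%:R^-1 * \sum_(i < n) d q (x i).

Definition panel_cost (n : nat) (d : X -> X -> R) (x : 'I_n -> X)
    (q : X) (S : {set 'I_n}) : R :=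
  (#|S|%:R)^-1 * \sum_(i in S) d q (x i).

(* Social-Opt = min over candidates; represented via a minimizer. *)
Definition is_social_opt (n : nat) (d : X -> X -> R) (C : X -> Prop)
    (x : 'I_n -> X) (qs : X) : Prop :=
  C qs /\ forall q, C q -> social_cost d x qs <= social_cost d x q.

Definition is_panel_opt (n : nat) (d : X -> X -> R) (C : X -> Prop)
    (x : 'I_n -> X) (S : {set 'I_n}) (q0 : X) : Prop :=
  C q0 /\ forall q, C q -> panel_cost d x q0 S <= panel_cost d x q S.

End FacilityLocation.

Definition unif_prob (R : realType) (n k : nat) (E : pred {set 'I_n}) : R :=
  (#|[set S : {set 'I_n} | (#|S| == k) && E S]|%:R)
  / (#|[set S : {set 'I_n} | #|S| == k]|%:R).

(* Write y_i = d(q*, x_i) and t = T * Social-Opt.  If a panel S of size k has a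
   panel-optimal point q with D = d(q*, q) > t, comparing the panel costs of q and q*
   through the triangle inequality gives k D <= 2 sum_(i in S) min(y_i, D); hence the
   clipped weights w_i = min(y_i / t, 1), whose population mean is at most 1/T, have
   sum at least k/2 over S.  A Chernoff-type bound for sampling without replacement
   makes such panels rare: with a_i = 1 + (T - 2) w_i, concavity of ln gives
   prod_(i in S) a_i >= (T - 1)^(k/2) on them, while Maclaurin's inequality bounds the
   average of prod_(i in S) a_i over all k-subsets by (mean a)^k <= (2 (T - 1) / T)^k.
   By Markov's inequality the fraction of bad panels is at most
   (4 (T - 1) / T^2)^(k/2) <= delta. *)

From HB Require Import structures.
From mathcomp Require Import all_boot all_order all_algebra.
From mathcomp Require Import interval_inference reals sequences exp convex.
From mathcomp Require Import ring lra.
Set Implicit Arguments. Unset Strict Implicit. Unset Printing Implicit Defensive.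
Import Order.TTheory GRing.Theory Num.Theory.
Local Open Scope ring_scope.

Lemma expr_tangent_le (R : realFieldType) (p q : R) (j : nat) : 0 <= p -> 0 <= q ->
  p ^+ j * (p + j.+1%:R * (q - p)) <= q ^+ j.+1.
Proof.
move=> p0 q0; elim: j => [|j IHj]; first by rewrite expr0 mul1r expr1; lra.
rewrite exprS [q ^+ _.+1]exprS; apply: le_trans (ler_wpM2l q0 IHj).
rewrite -subr_ge0.
have -> : q * (p ^+ j * (p + j.+1%:R * (q - p))) - p * p ^+ j * (p + j.+2%:R * (q - p))
    = p ^+ j * (j.+1%:R * (q - p) ^+ 2).
  rewrite -[j.+2]addn1 -[j.+1]addn1 !natrD; ring.
by rewrite mulr_ge0 ?exprn_ge0 // mulr_ge0 // sqr_ge0.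
Qed.

(* Induction step of Maclaurin's inequality: [u] and [v] are the mean weights of [m]
   points before and after adding a point of weight [y]. *)
Lemma maclaurin_step (R : realFieldType) (m j : nat) (u v y : R) :
  0 <= u -> 0 <= v -> m.+1%:R * v = m%:R * u + y ->
  'C(m, j.+1)%:R * u ^+ j.+1 + y * ('C(m, j)%:R * u ^+ j)
    <= 'C(m.+1, j.+1)%:R * v ^+ j.+1.
Proof.
move=> u0 v0 ey; have m1_gt0 : 0 < m.+1%:R :> R by rewrite ltr0n.
have e1 : m.+1%:R * 'C(m, j.+1)%:R = (m%:R - j%:R) * 'C(m.+1, j.+1)%:R :> R.
  have [jm|mj] := leqP j m; last by rewrite !bin_small ?mulr0 // ltnW.
  by rewrite -natrM mul_bin_down subSS natrM natrB.
have e0 : m.+1%:R * 'C(m, j)%:R = j.+1%:R * 'C(m.+1, j.+1)%:R :> R.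
  by rewrite -!natrM mul_bin_diag.
rewrite -(ler_pM2l m1_gt0).
(* By [e1], [e0] and [y = (m + 1) v - m u], this is the tangent-line bound at [u]. *)
have -> : m.+1%:R * ('C(m, j.+1)%:R * u ^+ j.+1 + y * ('C(m, j)%:R * u ^+ j))
    = 'C(m.+1, j.+1)%:R * m.+1%:R * (u ^+ j * (u + j.+1%:R * (v - u))).
  have -> : m.+1%:R * ('C(m, j.+1)%:R * u ^+ j.+1 + y * ('C(m, j)%:R * u ^+ j))
      = m.+1%:R * 'C(m, j.+1)%:R * u ^+ j.+1 + y * (m.+1%:R * 'C(m, j)%:R) * u ^+ j.
    by ring.
  have -> : y = m.+1%:R * v - m%:R * u by rewrite ey; ring.
  rewrite e1 e0 exprS -[m.+1]addn1 -[j.+1]addn1 !natrD; ring.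
rewrite -mulrA [leRHS]mulrCA; apply: ler_wpM2l => //.
by apply: ler_wpM2l; [exact: ltW | exact: expr_tangent_le].
Qed.

Section Maclaurin.
Variables (R : realFieldType) (I : finType) (a : I -> R).
Hypothesis a_ge0 : forall i, 0 <= a i.

Definition esym (A : {set I}) (k : nat) : R :=
  \sum_(S : {set I} | (S \subset A) && (#|S| == k)) \prod_(i in S) a i.

Lemma esym0 A : esym A 0 = 1.
Proof.
rewrite /esym (big_pred1 set0) ?big_set0 // => S /=.
by rewrite cards_eq0 andbC; case: eqP => //= ->; apply: sub0set.
Qed.

Lemma esymS_set0 k : esym set0 k.+1 = 0.
Proof.
rewrite /esym big_pred0 // => S; rewrite subset0.
by apply/negP => /andP[/eqP -> ]; rewrite cards0.
Qed.

Lemma esymS_setD1 (A : {set I}) x k : x \in A ->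
  esym A k.+1 = esym (A :\ x) k.+1 + a x * esym (A :\ x) k.
Proof.
move=> xA; rewrite /esym (bigID (fun S : {set I} => x \in S)) /= addrC.
congr (_ + _); first by apply: eq_bigl => S; rewrite subsetD1 andbAC.
rewrite (reindex_onto (fun S => x |: S) (fun S => S :\ x)) /=; last first.
  by move=> S /andP[_ xS]; rewrite setD1K.
have setU1K_eq S : ((x |: S) :\ x == S) = (x \notin S).
  by apply/eqP/idP => [<-|/setU1K //]; rewrite setD11.
rewrite mulr_sumr; apply: eq_big => S.
  rewrite setU11 andbT setU1K_eq subsetD1.
  case xS: (x \in S); rewrite /= ?andbF ?andbT //.
  by rewrite cardsU1 xS add1n eqSS subUset sub1set xA.
by rewrite setU1K_eq => /andP[_ xS]; rewrite big_setU1.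
Qed.

Lemma esym_le_maclaurin A k :
  esym A k <= 'C(#|A|, k)%:R * ((\sum_(i in A) a i) / #|A|%:R) ^+ k.
Proof.
have [N cardA] : exists N, #|A| = N by eexists.
rewrite cardA; elim: N A cardA k => [|m IHm] A cardA [|j].
- by rewrite esym0 bin0 expr0 mulr1.
- by rewrite (cards0_eq cardA) esymS_set0 bin0n mul0r.
- by rewrite esym0 bin0 expr0 mulr1.
have [x xA] : exists x, x \in A by apply/card_gt0P; rewrite cardA.
have cardAx : #|A :\ x| = m by move: cardA; rewrite (cardsD1 x) xA add1n => -[].
rewrite (esymS_setD1 j xA) (big_setD1 x xA) /=.
set s := \sum_(i in A :\ x) a i.
have s_ge0 : 0 <= s by apply: sumr_ge0.
have s_mean : m%:R * (s / m%:R) = s.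
  have [m0|m_gt0] := posnP m; last by rewrite mulrC divfK // pnatr_eq0 -lt0n.
  by rewrite /s (cards0_eq (etrans cardAx m0)) big_set0 mul0r mulr0.
apply: le_trans (maclaurin_step (u := s / m%:R) (y := a x) j _ _ _).
- apply: lerD; first exact: IHm.
  by apply: ler_wpM2l => //; apply: IHm.
- by rewrite divr_ge0.
- by rewrite divr_ge0 ?addr_ge0.
- by rewrite mulrC divfK ?pnatr_eq0 // s_mean addrC.
Qed.

Lemma maclaurin k :
  \sum_(S : {set I} | #|S| == k) \prod_(i in S) a i
    <= 'C(#|I|, k)%:R * ((\sum_i a i) / #|I|%:R) ^+ k.
Proof.
have esymT : esym setT k = \sum_(S : {set I} | #|S| == k) \prod_(i in S) a i.
  by apply: eq_bigl => S; rewrite subsetT.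
have sumT : \sum_(i in [set: I]) a i = \sum_i a i.
  by apply: eq_bigl => i; rewrite in_setT.
by rewrite -esymT -sumT -cardsT esym_le_maclaurin.
Qed.

End Maclaurin.

Lemma maclaurin_markov (R : realFieldType) (I : finType) (a : I -> R) (B L : R)
    (k : nat) (P : pred {set I}) :
  (forall i, 0 <= a i) -> (\sum_i a i) / #|I|%:R <= B ->
  (forall S : {set I}, #|S| = k -> P S -> L <= \prod_(i in S) a i) ->
  #|[set S : {set I} | (#|S| == k) && P S]|%:R * L <= 'C(#|I|, k)%:R * B ^+ k.
Proof.
move=> a_ge0 mean_le prod_ge.
have mean_ge0 : 0 <= (\sum_i a i) / #|I|%:R by rewrite divr_ge0 ?sumr_ge0.
rewrite -sum1dep_card natr_sum mulr_suml.
apply: (@le_trans _ _ (\sum_(S : {set I} | (#|S| == k) && P S) \prod_(i in S) a i)).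
  by apply: ler_sum => S /andP[/eqP cardS PS]; rewrite mul1r prod_ge.
apply: le_trans (_ : \sum_(S : {set I} | #|S| == k) \prod_(i in S) a i <= _).
  rewrite [leRHS](bigID P) /= lerDl.
  by apply: sumr_ge0 => S _; apply: prodr_ge0.
apply: le_trans (maclaurin a_ge0 k) _; apply: ler_wpM2l => //.
by apply: lerXn2r; rewrite ?nnegrE // (le_trans mean_ge0).
Qed.

Lemma expR_sum_ln_le_prod (R : realType) (I : finType) (S : {set I}) (w : I -> R)
    (l : R) :
  0 < l -> (forall i, 0 <= w i <= 1) ->
  expR (\sum_(i in S) w i * ln l) <= \prod_(i in S) (1 + w i * (l - 1)).
Proof.
move=> l_gt0 w01.
have interp_gt0 i : 0 < 1 + w i * (l - 1) by have := w01 i; nra.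
have -> : \prod_(i in S) (1 + w i * (l - 1))
    = expR (\sum_(i in S) ln (1 + w i * (l - 1))).
  by rewrite expR_sum; apply: eq_bigr => i _; rewrite lnK // posrE.
rewrite ler_expR; apply: ler_sum => i _; have /andP[w0 w1] := w01 i.
have := concave_ln (Itv01 w0 w1) l_gt0 ltr01.
rewrite !convRE /= ln1 mulr0 addr0.
by have -> : w i * l + (1 - w i) * 1 = 1 + w i * (l - 1) by ring.
Qed.

Lemma card_heavy_ksubsets_le (R : realType) (I : finType) (w : I -> R) (T : R) (k : nat)
    (P : pred {set I}) :
  2 <= T -> (forall i, 0 <= w i <= 1) -> \sum_i w i <= #|I|%:R / T ->
  (forall S : {set I}, #|S| = k -> P S -> k%:R / 2 <= \sum_(i in S) w i) ->
  #|[set S : {set I} | (#|S| == k) && P S]|%:R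
    <= 'C(#|I|, k)%:R * expR (- (k%:R / 2 * ln (T ^+ 2 / (4 * (T - 1))))).
Proof.
move=> T_ge2 w01 sum_w heavy.
(* [T ^+ 2 / (4 * (T - 1)) = l / B ^+ 2]: the products over heavy panels are at least
   [l ^ (k / 2)] and the weights [a] have mean at most [B]. *)
set l := T - 1; set B := 2 * (T - 1) / T.
have l_gt0 : 0 < l by rewrite /l; lra.
have B_gt0 : 0 < B by rewrite /B divr_gt0 //; lra.
set a := fun i => 1 + w i * (l - 1).
have a_ge0 i : 0 <= a i by have := w01 i; rewrite /a /l; nra.
have mean_a : (\sum_i a i) / #|I|%:R <= B.
  have [->|I_gt0] := posnP #|I|; first by rewrite invr0 mulr0 ltW.
  rewrite ler_pdivrMr ?ltr0n // big_split /= sumr_const -mulr_suml.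
  have := ler_wpM2r (_ : 0 <= l - 1) sum_w; rewrite /l.
  have -> : B * #|I|%:R = #|I|%:R + #|I|%:R / T * (T - 1 - 1).
    by rewrite /B; field; rewrite gt_eqF //; lra.
  lra.
pose L := expR (k%:R / 2 * ln l).
have prod_a_ge (S : {set I}) : #|S| = k -> P S -> L <= \prod_(i in S) a i.
  move=> cardS PS; apply: le_trans (expR_sum_ln_le_prod S l_gt0 w01).
  rewrite ler_expR -mulr_suml ler_wpM2r ?heavy // ln_ge0 //; rewrite /l; lra.
have rhoE : T ^+ 2 / (4 * (T - 1)) = l / B ^+ 2.
  by rewrite /l /B; field; rewrite gt_eqF //; lra.
have BkE : B ^+ k = expR (k%:R * ln B) by rewrite expRM_natl lnK // posrE.
rewrite -(ler_pM2r (expR_gt0 (k%:R / 2 * ln l))).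
apply: le_trans (maclaurin_markov a_ge0 mean_a prod_a_ge) _.
rewrite -[leRHS]mulrA -expRD BkE rhoE ln_div ?posrE ?exprn_gt0 // lnXn //.
suff -> : - (k%:R / 2 * (ln l - ln B *+ 2)) + k%:R / 2 * ln l = k%:R * ln B by [].
by rewrite mulr2n; field.
Qed.

Lemma unif_prob_ge_of_card_compl (R : realType) (n k : nat) (E : pred {set 'I_n})
    (delta : R) :
  (k <= n)%N ->
  #|[set S : {set 'I_n} | (#|S| == k) && ~~ E S]|%:R <= delta * 'C(n, k)%:R ->
  1 - delta <= unif_prob R k E.
Proof.
move=> kn bad_le; rewrite /unif_prob card_draws card_ord.
have C_gt0 : 0 < 'C(n, k)%:R :> R by rewrite ltr0n bin_gt0.
have cardE : #|[set S : {set 'I_n} | (#|S| == k) && E S]|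
    + #|[set S : {set 'I_n} | (#|S| == k) && ~~ E S]| = 'C(n, k).
  have := card_draws 'I_n k; rewrite card_ord => <-.
  rewrite -(cardsID [set S | E S] [set S : {set 'I_n} | #|S| == k]); congr (_ + _).
    by apply: eq_card => S; rewrite !inE andbC.
  by apply: eq_card => S; rewrite !inE andbC.
rewrite ler_pdivlMr // -cardE natrD in bad_le *; lra.
Qed.

Lemma card_mul_dist_le_sum_min (R : realDomainType) (X : Type) (I : finType)
    (d : X -> X -> R) (x : I -> X) (p q : X) (S : {set I}) :
  (forall u v, d u v = d v u) -> (forall u v w, d u w <= d u v + d v w) ->
  \sum_(i in S) d q (x i) <= \sum_(i in S) d p (x i) ->
  #|S|%:R * d p q <= 2 * \sum_(i in S) Num.min (d p (x i)) (d p q).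
Proof.
move=> dC dtri q_better.
have pointwise i : d p q - 2 * Num.min (d p (x i)) (d p q) <= d q (x i) - d p (x i).
  have := dtri p (x i) q; have := dtri p q (x i); rewrite (dC (x i) q).
  by rewrite minEle; case: ifP => _; lra.
have : \sum_(i in S) (d p q - 2 * Num.min (d p (x i)) (d p q))
    <= \sum_(i in S) (d q (x i) - d p (x i)) by apply: ler_sum => i _.
rewrite !sumrB sumr_const -mulr_natl -mulr_sumr; lra.
Qed.

Lemma sum_clip_ge_half (R : realFieldType) (I : finType) (y : I -> R) (S : {set I})
    (t D : R) :
  (forall i, 0 <= y i) -> 0 <= t < D -> (t = 0 -> forall i, y i = 0) ->
  #|S|%:R * D <= 2 * \sum_(i in S) Num.min (y i) D ->
  #|S|%:R / 2 <= \sum_(i in S) Num.min (y i / t) 1.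
Proof.
move=> y_ge0 /andP[t_ge0 t_lt_D] t0_y0 card_le.
have D_gt0 : 0 < D by apply: le_lt_trans t_lt_D.
have clip i : Num.min (y i) D <= D * Num.min (y i / t) 1.
  have [t0|t_neq0] := eqVneq t 0.
    by rewrite (t0_y0 t0) mul0r !minEle (ltW D_gt0) ler01 mulr0.
  have t_gt0 : 0 < t by rewrite lt0r t_neq0.
  have yE : y i = y i / t * t by rewrite divfK.
  have := y_ge0 i; rewrite !minEle; move: yE; set r := y i / t => yE.
  by case: (leP (y i) D) => ?; case: (leP r 1) => ?; nra.
have : \sum_(i in S) Num.min (y i) D <= D * \sum_(i in S) Num.min (y i / t) 1.
  by rewrite mulr_sumr; apply: ler_sum => i _.
move=> sum_le; rewrite ler_pdivrMr // -(ler_pM2l D_gt0); lra.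
Qed.

Lemma expR_neg_half_ln_le (R : realType) (rho delta : R) (k : nat) :
  1 < rho -> 0 < delta -> 2 * ln delta^-1 / ln rho <= k%:R ->
  expR (- (k%:R / 2 * ln rho)) <= delta.
Proof.
move=> rho_gt1 delta_gt0; rewrite ler_pdivrMr ?ln_gt0 // => k_ge.
rewrite -[leRHS]lnK ?posrE // ler_expR -[ln delta]opprK -lnV ?posrE // lerN2; lra.
Qed.

Section ClippedDistances.
Variables (R : realType) (X : Type) (d : X -> X -> R) (n : nat) (x : 'I_n -> X).
Variables (qs : X) (T : R).
Hypothesis d_ge0 : forall p q, 0 <= d p q.
Hypothesis T_gt0 : 0 < T.

(* When Social-Opt is 0 every [d qs (x i)] vanishes, so the junk value [_ / 0 = 0]
   is harmless. *)
Definition clip_weight (i : 'I_n) : R :=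
  Num.min (d qs (x i) / (T * social_cost d x qs)) 1.

Lemma social_cost_ge0 q : 0 <= social_cost d x q.
Proof. by rewrite mulr_ge0 ?invr_ge0 // sumr_ge0. Qed.

Lemma clip_weight_ge0_le1 i : 0 <= clip_weight i <= 1.
Proof.
rewrite le_min ge_min lexx orbT ler01 andbT divr_ge0 //.
by rewrite mulr_ge0 ?social_cost_ge0 // ltW.
Qed.

Lemma social_cost_eq0 : social_cost d x qs = 0 -> forall i, d qs (x i) = 0.
Proof.
move=> /eqP; rewrite mulf_eq0 invr_eq0 pnatr_eq0 -leqn0 => /orP[n_le0|/eqP sum0] i.
  by have := leq_trans (ltn_ord i) n_le0.
by apply: (@psumr_eq0P _ _ predT (fun j => d qs (x j))) => //; rewrite sum0.
Qed.

Lemma sum_clip_weight : \sum_i clip_weight i <= n%:R / T.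
Proof.
apply: le_trans (_ : \sum_i d qs (x i) / (T * social_cost d x qs) <= _).
  by apply: ler_sum => i _; rewrite ge_min lexx.
rewrite -mulr_suml; have [mu0|mu_neq0] := eqVneq (social_cost d x qs) 0.
  by rewrite mu0 mulr0 invr0 mulr0 divr_ge0 // ltW.
move: mu_neq0; rewrite /social_cost mulf_eq0 negb_or invr_eq0 => /andP[n_neq0 sum_neq0].
suff -> : (\sum_i d qs (x i)) / (T * (n%:R^-1 * \sum_i d qs (x i))) = n%:R / T by [].
by field; rewrite n_neq0 sum_neq0 gt_eqF.
Qed.

Lemma clip_weight_panel_ge (S : {set 'I_n}) (q : X) :
  (forall u v, d u v = d v u) -> (forall u v w, d u w <= d u v + d v w) ->
  panel_cost d x q S <= panel_cost d x qs S -> T * social_cost d x qs < d qs q ->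
  #|S|%:R / 2 <= \sum_(i in S) clip_weight i.
Proof.
move=> dC dtri q_better far.
have sum_better : \sum_(i in S) d q (x i) <= \sum_(i in S) d qs (x i).
  have [/eqP|S_gt0] := posnP #|S|.
    by rewrite cards_eq0 => /eqP ->; rewrite !big_set0.
  by move: q_better; rewrite /panel_cost ler_pM2l // invr_gt0 ltr0n.
apply: (sum_clip_ge_half (D := d qs q)) => //.
- by rewrite far mulr_ge0 ?social_cost_ge0 // ltW.
- by move=> /eqP; rewrite mulf_eq0 gt_eqF //= => /eqP; apply: social_cost_eq0.
- exact: card_mul_dist_le_sum_min.
Qed.

End ClippedDistances.

Theorem theorem4p2 (R : realType) (X : Type) (C : X -> Prop) (d : X -> X -> R)
    (n : nat) (x : 'I_n -> X) (qs : X) (qbar : {set 'I_n} -> X)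
    (T delta : R) (k : nat) :
  is_metric01 d ->
  is_social_opt d C x qs ->
  (forall S : {set 'I_n}, #|S| = k -> is_panel_opt d C x S (qbar S)) ->
  2 < T -> 0 < delta < 1 ->
  (k <= n)%N ->
  2 * ln (delta^-1) / ln (T ^+ 2 / (4 * (T - 1))) <= k%:R ->
  1 - delta <=
    unif_prob R k (fun S => d qs (qbar S) <= T * social_cost d x qs).
Proof.
move=> [d_01 _ dC dtri] [C_qs _] qbar_opt T_gt2 /andP[delta_gt0 _] kn k_ge.
have d_ge0 p q : 0 <= d p q by case/andP: (d_01 p q).
have T_gt0 : 0 < T by apply: lt_trans T_gt2.
have rho_gt1 : 1 < T ^+ 2 / (4 * (T - 1)) by rewrite ltr_pdivlMr ?mul1r; nra.
have far_heavy (S : {set 'I_n}) : #|S| = k ->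
    ~~ (d qs (qbar S) <= T * social_cost d x qs) ->
    k%:R / 2 <= \sum_(i in S) clip_weight d x qs T i.
  move=> cardS; rewrite -ltNge -cardS; apply: clip_weight_panel_ge => //.
  by case: (qbar_opt S cardS) => _; apply.
apply: unif_prob_ge_of_card_compl kn _.
apply: le_trans (card_heavy_ksubsets_le (ltW T_gt2) (clip_weight_ge0_le1 x qs d_ge0 T_gt0)
  _ far_heavy) _.
- by rewrite card_ord; apply: sum_clip_weight.
- by rewrite card_ord mulrC ler_wpM2r // expR_neg_half_ln_le.
Qed.
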